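(* Let $\mathsf{X}=\mathsf{Y}=\{0,1\}$, $\mu=\psi=\mathrm{Bernoulli}(1/2)$ and $\rho(x,y)=1_{\{x\ne y\}}$ (Hamming distortion). Then for every $D\in(0,1/2)$, $$I_0(\mu\|\psi,D)<C_0(\mu\|\psi,D).$$
   Context: $I_0(\mu\|\psi,D):=\min\{\max(I(X;U),I(Y;U)):\ P_X=\mu,\ P_Y=\psi,\ \mathbb{E}[\rho(X,Y)]\le D,\ X-U-Y\text{ Markov},\ |\mathsf{U}|\le|\mathsf{X}|+|\mathsf{Y}|+1\}$ (the minimum coding rate with no common randomness for the output-constrained problem). Wyner's common information of a joint law $P_{X,Y}$ is $C(X;Y):=\inf\{I(X,Y;U): X-U-Y\text{ Markov}, U \text{ finite-valued}\}$, and $C_0(\mu\|\psi,D):=\min\{C(X;Y): P_X=\mu,\ P_Y=\psi,\ \mathbb{E}[\rho(X,Y)]\le D\}$. *)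

From Stdlib Require Import Reals.
Open Scope R_scope.

Fixpoint sumN (n : nat) (f : nat -> R) : R :=
  match n with O => 0 | S k => sumN k f + f k end.
Definition sumB (f : bool -> R) : R := f false + f true.

(* Convention 0 log(0/b) = 0; natural logarithm (base irrelevant here). *)
Definition plog (a b : R) : R :=
  if Req_EM_T a 0 then 0 else a * ln (a / b).

(* A joint law of (X,U,Y) on {0,1} x {0,...,n-1} x {0,1}, written p x u y. *)
Definition joint := bool -> nat -> bool -> R.

Definition valid (n : nat) (p : joint) : Prop :=
  (forall x u y, 0 <= p x u y) /\
  (forall x u y, (n <= u)%nat -> p x u y = 0) /\
  sumB (fun x => sumN n (fun u => sumB (fun y => p x u y))) = 1.

Definition pX  (n : nat) (p : joint) (x : bool) : R := sumN n (fun u => sumB (p x u)).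
Definition pY  (n : nat) (p : joint) (y : bool) : R := sumN n (fun u => sumB (fun x => p x u y)).
Definition pU  (p : joint) (u : nat) : R := sumB (fun x => sumB (p x u)).
Definition pXU (p : joint) (x : bool) (u : nat) : R := sumB (p x u).
Definition pUY (p : joint) (u : nat) (y : bool) : R := sumB (fun x => p x u y).
Definition pXY (n : nat) (p : joint) (x y : bool) : R := sumN n (fun u => p x u y).

(* X - U - Y Markov chain: P(x,u,y) P(u) = P(x,u) P(u,y). *)
Definition markov (p : joint) : Prop :=
  forall x u y, p x u y * pU p u = pXU p x u * pUY p u y.

Definition MI_XU (n : nat) (p : joint) : R :=
  sumB (fun x => sumN n (fun u => plog (pXU p x u) (pX n p x * pU p u))).
Definition MI_YU (n : nat) (p : joint) : R :=
  sumB (fun y => sumN n (fun u => plog (pUY p u y) (pY n p y * pU p u))).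
Definition MI_XY_U (n : nat) (p : joint) : R :=
  sumB (fun x => sumB (fun y => sumN n (fun u =>
    plog (p x u y) (pXY n p x y * pU p u)))).

(* Hamming distortion E[rho(X,Y)] = P(X <> Y). *)
Definition distortion (n : nat) (p : joint) : R := pXY n p false true + pXY n p true false.

Definition is_inf (S : R -> Prop) (m : R) : Prop :=
  (forall r, S r -> m <= r) /\ (forall m', (forall r, S r -> m' <= r) -> m' <= m).

(* mu = psi = Bernoulli(1/2); |U| <= |X|+|Y|+1 = 5, i.e. U takes values in {0,...,4}. *)
Definition I0_set (D : R) (r : R) : Prop :=
  exists p : joint, valid 5 p /\ markov p /\
    (forall x, pX 5 p x = 1/2) /\ (forall y, pY 5 p y = 1/2) /\
    distortion 5 p <= D /\ r = Rmax (MI_XU 5 p) (MI_YU 5 p).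

Definition coupling (q : bool -> bool -> R) : Prop :=
  (forall x y, 0 <= q x y) /\
  (forall x, sumB (q x) = 1/2) /\ (forall y, sumB (fun x => q x y) = 1/2).

(* Wyner's common information C(X;Y) for P_{XY} = q: inf over finite-valued U. *)
Definition Wyner_set (q : bool -> bool -> R) (r : R) : Prop :=
  exists (n : nat) (p : joint), valid n p /\ markov p /\
    (forall x y, pXY n p x y = q x y) /\ r = MI_XY_U n p.

Definition C0_set (D : R) (c : R) : Prop :=
  exists q, coupling q /\ q false true + q true false <= D /\ is_inf (Wyner_set q) c.

(* Put a := (1 - sqrt (1 - 2D)) / 2, so that 2a(1-a) = D.  Feeding a uniform bit U into two
   independent binary symmetric channels with crossover a gives X, Y with P(X <> Y) = D and
   I(X;U) = I(Y;U) = ln 2 - h(a), hence I0 <= ln 2 - h(a).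
   Conversely, let X - U - Y with X, Y uniform and P(X <> Y) = e.  Given U = u, X and Y are
   independent Bernoulli(s_u) and Bernoulli(t_u), so
     I(X,Y;U) = ln 2 + h(e) - sum_u P(u) (h(s_u) + h(t_u)).
   As s |-> h((1 - sqrt s)/2) is concave, its tangent at (1-2a)^2 bounds h(s_u) + h(t_u) by an
   affine function of (1 - 2 s_u)(1 - 2 t_u), whose P(u)-average is 1 - 2e.  This gives
   I(X,Y;U) >= wyner_bound a e, which is concave in e; on [0, D] it is therefore at least its
   value at 0 or at D, and both exceed ln 2 - h(a). *)

From Stdlib Require Import Reals Lra Lia.
From Coquelicot Require Import Coquelicot.
Open Scope R_scope.

Lemma ln_le_sub_1 x : 0 < x -> ln x <= x - 1.
Proof. intros Hx. pose proof (exp_ineq1_le (ln x)). rewrite exp_ln in H by lra. lra. Qed.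

Lemma ln_lt_sub_1 x : 0 < x -> x <> 1 -> ln x < x - 1.
Proof.
intros Hx Hx1. pose proof (exp_ineq1 (ln x) (ln_neq_0 x Hx1 Hx)).
rewrite exp_ln in H by lra. lra.
Qed.

Lemma ln_nonpos x : 0 < x <= 1 -> ln x <= 0.
Proof. intros Hx. rewrite <- ln_1. apply ln_le; lra. Qed.

Lemma ge_at_deriv_sign_change (f f' : R -> R) (l m r : R) :
  l < m -> m <= r ->
  (forall x, l < x <= r -> derivable_pt_lim f x (f' x)) ->
  (forall x, l < x <= m -> f' x <= 0) ->
  (forall x, m <= x <= r -> 0 <= f' x) ->
  forall x, l < x <= r -> f m <= f x.
Proof.
intros Hlm Hmr Hd Hneg Hpos x Hx.
destruct (Rtotal_order x m) as [Hxm | [-> | Hmx]].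
- destruct (MVT_cor2 f f' x m Hxm) as (c & E & Hc).
  { intros c Hc. apply Hd. lra. }
  pose proof (Hneg c ltac:(lra)). nra.
- lra.
- destruct (MVT_cor2 f f' m x Hmx) as (c & E & Hc).
  { intros c Hc. apply Hd. lra. }
  pose proof (Hpos c ltac:(lra)). nra.
Qed.

Lemma min_ends_le_of_deriv_antitone (f f' : R -> R) (l r : R) :
  (forall x, l <= x <= r -> derivable_pt_lim f x (f' x)) ->
  (forall x y, l <= x <= y -> y <= r -> f' y <= f' x) ->
  forall x, l <= x <= r -> Rmin (f l) (f r) <= f x.
Proof.
intros Hd Hanti x Hx.
destruct (Rle_lt_dec 0 (f' x)) as [Hnn | Hneg].
- apply Rle_trans with (f l); [apply Rmin_l |].
  destruct (Req_dec l x) as [-> | Hlx]; [lra |].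
  destruct (MVT_cor2 f f' l x ltac:(lra)) as (c & E & Hc).
  { intros c Hc. apply Hd. lra. }
  pose proof (Hanti c x ltac:(lra) ltac:(lra)). nra.
- apply Rle_trans with (f r); [apply Rmin_r |].
  destruct (Req_dec x r) as [-> | Hxr]; [lra |].
  destruct (MVT_cor2 f f' x r ltac:(lra)) as (c & E & Hc).
  { intros c Hc. apply Hd. lra. }
  pose proof (Hanti x c ltac:(lra) ltac:(lra)). nra.
Qed.

Definition binary_entropy (x : R) : R := - (x * ln x) - (1 - x) * ln (1 - x).

Lemma binary_entropy_0 : binary_entropy 0 = 0.
Proof. unfold binary_entropy. rewrite Rminus_0_r, ln_1. ring. Qed.

Lemma binary_entropy_1_sub x : binary_entropy (1 - x) = binary_entropy x.
Proof. unfold binary_entropy. replace (1 - (1 - x)) with x by ring. ring. Qed.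

Lemma derivable_pt_lim_binary_entropy x :
  0 < x < 1 -> derivable_pt_lim binary_entropy x (ln (1 - x) - ln x).
Proof.
intros Hx. apply is_derive_Reals. unfold binary_entropy. auto_derive; [lra |].
replace (1 + - x) with (1 - x) by ring. field. lra.
Qed.

Lemma binary_entropy_ge_linear c x :
  0 < x <= 1 -> x <= exp (- c) -> c * x <= binary_entropy x.
Proof.
intros Hx Hxc. unfold binary_entropy.
assert (ln x <= - c) by (rewrite <- (ln_exp (- c)); apply ln_le; lra).
assert ((1 - x) * ln (1 - x) <= 0).
{ destruct (Req_dec x 1) as [-> | Hx1]; [lra |].
  pose proof (ln_nonpos (1 - x) ltac:(lra)). nra. }
nra.
Qed.

Lemma binary_entropy_lt x y : 0 < x -> x < y -> y <= 1/2 -> binary_entropy x < binary_entropy y.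
Proof.
intros Hx Hxy Hy.
destruct (MVT_cor2 binary_entropy (fun t => ln (1 - t) - ln t) x y Hxy) as (c & E & Hc).
{ intros c Hc. apply derivable_pt_lim_binary_entropy. lra. }
assert (ln c < ln (1 - c)) by (apply ln_increasing; lra).
assert (0 < (ln (1 - c) - ln c) * (y - x)) by (apply Rmult_lt_0_compat; lra). lra.
Qed.

Definition log_odds (t : R) : R := ln (1 + t) - ln (1 - t).

Lemma log_odds_0 : log_odds 0 = 0.
Proof. unfold log_odds. rewrite Rplus_0_r, Rminus_0_r. ring. Qed.

Lemma log_odds_1_sub_2mul x : 0 < x < 1 -> log_odds (1 - 2 * x) = ln (1 - x) - ln x.
Proof.
intros Hx. unfold log_odds.
replace (1 + (1 - 2 * x)) with (2 * (1 - x)) by ring.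
replace (1 - (1 - 2 * x)) with (2 * x) by ring.
rewrite !ln_mult by lra. ring.
Qed.

(* [log_odds] is convex on [0,1), so [log_odds t / t] is nondecreasing there. *)
Lemma log_odds_chord s t : 0 <= s -> s <= t -> t < 1 -> t * log_odds s <= s * log_odds t.
Proof.
intros Hs Hst Ht.
set (d u := / (1 + u) + / (1 - u)).
assert (Hd : forall t, -1 < t < 1 -> derivable_pt_lim log_odds t (d t)).
{ intros u Hu. apply is_derive_Reals. unfold log_odds, d. auto_derive; [lra |].
  replace (1 + - u) with (1 - u) by ring. field. lra. }
assert (Hmono : forall u v, 0 <= u -> u <= v -> v < 1 -> d u <= d v).
{ intros u v Hu Huv Hv. unfold d.
  replace (/ (1 + u) + / (1 - u)) with (2 / (1 - u * u)) by (field; split; nra).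
  replace (/ (1 + v) + / (1 - v)) with (2 / (1 - v * v)) by (field; split; nra).
  apply Rmult_le_compat_l; [lra |]. apply Rinv_le_contravar; nra. }
destruct (Req_dec s 0) as [-> | Hs0]; [rewrite log_odds_0; lra |].
destruct (Req_dec s t) as [-> | Hst']; [lra |].
destruct (MVT_cor2 log_odds d 0 s ltac:(lra)) as (c1 & E1 & Hc1).
{ intros c Hc. apply Hd. lra. }
destruct (MVT_cor2 log_odds d s t ltac:(lra)) as (c2 & E2 & Hc2).
{ intros c Hc. apply Hd. lra. }
rewrite log_odds_0 in E1.
pose proof (Hmono c1 c2 ltac:(lra) ltac:(lra) ltac:(lra)).
assert (Et : log_odds t = log_odds s + d c2 * (t - s)) by lra.
assert (Es : log_odds s = d c1 * s) by lra.
assert (0 <= s * (t - s) * (d c2 - d c1)) by (apply Rmult_le_pos; nra).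
rewrite Et, Es. nra.
Qed.

(* [-tangent_slope a] is the derivative at [(1-2a)^2] of [s |-> binary_entropy ((1 - sqrt s)/2)],
   a concave function: below, [binary_entropy] is bounded by its tangent in that variable. *)
Definition tangent_slope (a : R) : R := (ln (1 - a) - ln a) / (4 * (1 - 2 * a)).

Section Tangent.
Variable a : R.
Hypothesis Ha : 0 < a < 1/2.

Lemma tangent_slope_pos : 0 < tangent_slope a.
Proof.
unfold tangent_slope. assert (ln a < ln (1 - a)) by (apply ln_increasing; lra).
apply Rdiv_lt_0_compat; lra.
Qed.

Lemma four_tangent_slope : 4 * tangent_slope a = log_odds (1 - 2 * a) / (1 - 2 * a).
Proof. rewrite log_odds_1_sub_2mul by lra. unfold tangent_slope. field. lra. Qed.

Lemma binary_entropy_tangent_interior x :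
  0 < x <= 1/2 ->
  binary_entropy x <= binary_entropy a - tangent_slope a * ((1 - 2 * x) ^ 2 - (1 - 2 * a) ^ 2).
Proof.
intros Hx. set (mu := tangent_slope a).
set (g y := binary_entropy a - mu * ((1 - 2 * y) ^ 2 - (1 - 2 * a) ^ 2) - binary_entropy y).
set (g' y := 4 * mu * (1 - 2 * y) - (ln (1 - y) - ln y)).
assert (Hg' : forall y, 0 < y <= 1/2 -> g' y = (4 * mu * (1 - 2 * y) - log_odds (1 - 2 * y))).
{ intros y Hy. unfold g'. rewrite log_odds_1_sub_2mul by lra. reflexivity. }
assert (Hmu : 4 * mu * (1 - 2 * a) = log_odds (1 - 2 * a)).
{ unfold mu. rewrite four_tangent_slope. field. lra. }
enough (g a <= g x) by (unfold g in *; lra).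
apply (ge_at_deriv_sign_change g g' 0 a (1/2)); try lra.
- intros y Hy. apply is_derive_Reals. unfold g, g', binary_entropy. auto_derive; [lra |].
  replace (1 + - y) with (1 - y) by ring. field. lra.
- intros y Hy. rewrite Hg' by lra.
  pose proof (log_odds_chord (1 - 2 * a) (1 - 2 * y) ltac:(lra) ltac:(lra) ltac:(lra)).
  apply (Rmult_le_reg_l (1 - 2 * a)); [lra |].
  replace ((1 - 2 * a) * (4 * mu * (1 - 2 * y) - log_odds (1 - 2 * y)))
    with ((1 - 2 * y) * (4 * mu * (1 - 2 * a)) - (1 - 2 * a) * log_odds (1 - 2 * y)) by ring.
  rewrite Hmu. lra.
- intros y Hy. rewrite Hg' by lra.
  pose proof (log_odds_chord (1 - 2 * y) (1 - 2 * a) ltac:(lra) ltac:(lra) ltac:(lra)).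
  apply (Rmult_le_reg_l (1 - 2 * a)); [lra |].
  replace ((1 - 2 * a) * (4 * mu * (1 - 2 * y) - log_odds (1 - 2 * y)))
    with ((1 - 2 * y) * (4 * mu * (1 - 2 * a)) - (1 - 2 * a) * log_odds (1 - 2 * y)) by ring.
  rewrite Hmu. lra.
Qed.

Lemma binary_entropy_tangent x :
  0 <= x <= 1 ->
  binary_entropy x <= binary_entropy a - tangent_slope a * ((1 - 2 * x) ^ 2 - (1 - 2 * a) ^ 2).
Proof.
assert (Hhalf : forall y, 0 <= y <= 1/2 -> binary_entropy y <=
          binary_entropy a - tangent_slope a * ((1 - 2 * y) ^ 2 - (1 - 2 * a) ^ 2)).
{ intros y Hy. destruct (Req_dec y 0) as [-> | Hy0]; [| apply binary_entropy_tangent_interior; lra].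
  (* at the endpoint, pass through a point [e] so close to 0 that
     [4 * tangent_slope a * e <= binary_entropy e] *)
  pose proof tangent_slope_pos.
  set (e := Rmin a (exp (- (4 * tangent_slope a)))).
  assert (He : 0 < e <= a).
  { split; [apply Rmin_pos; [lra | apply exp_pos] | apply Rmin_l]. }
  pose proof (binary_entropy_tangent_interior e ltac:(lra)).
  pose proof (binary_entropy_ge_linear (4 * tangent_slope a) e ltac:(lra) (Rmin_r _ _)).
  rewrite binary_entropy_0. nra. }
intros Hx. destruct (Rle_lt_dec x (1/2)); [apply Hhalf; lra |].
rewrite <- binary_entropy_1_sub. replace ((1 - 2 * x) ^ 2) with ((1 - 2 * (1 - x)) ^ 2) by ring.
apply Hhalf; lra.
Qed.

Lemma binary_entropy_add_le x y :
  0 <= x <= 1 -> 0 <= y <= 1 ->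
  binary_entropy x + binary_entropy y <=
  2 * binary_entropy a - 2 * tangent_slope a * ((1 - 2 * x) * (1 - 2 * y) - (1 - 2 * a) ^ 2).
Proof.
intros Hx Hy.
pose proof (binary_entropy_tangent x Hx). pose proof (binary_entropy_tangent y Hy).
pose proof tangent_slope_pos.
assert (0 <= tangent_slope a * ((x - y) * (x - y))) by (apply Rmult_le_pos; [lra | apply Rle_0_sqr]).
nra.
Qed.

End Tangent.

Definition wyner_bound (a e : R) : R :=
  ln 2 - 2 * binary_entropy a + binary_entropy e
  + 2 * tangent_slope a * (1 - 2 * e - (1 - 2 * a) ^ 2).

Section WynerBound.
Variable a : R.
Hypothesis Ha : 0 < a < 1/2.

Lemma wyner_bound_min_ends r e :
  0 < r < 1 -> 0 <= e <= r -> Rmin (wyner_bound a 0) (wyner_bound a r) <= wyner_bound a e.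
Proof.
intros Hr He. pose proof (tangent_slope_pos a Ha) as Hmu.
set (e0 := Rmin r (exp (- (4 * tangent_slope a)))).
assert (He0 : 0 < e0 <= r) by (split; [apply Rmin_pos; [lra | apply exp_pos] | apply Rmin_l]).
assert (Hnear0 : forall x, 0 <= x <= e0 -> wyner_bound a 0 <= wyner_bound a x).
{ intros x Hx. destruct (Req_dec x 0) as [-> | Hx0]; [apply Rle_refl |].
  unfold wyner_bound. rewrite binary_entropy_0.
  pose proof (binary_entropy_ge_linear (4 * tangent_slope a) x ltac:(lra)
                (Rle_trans _ _ _ (proj2 Hx) (Rmin_r _ _))). nra. }
destruct (Rle_lt_dec e e0) as [Hee0 | Hee0].
{ apply Rle_trans with (wyner_bound a 0); [apply Rmin_l | apply Hnear0; lra]. }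
apply Rle_trans with (Rmin (wyner_bound a e0) (wyner_bound a r)).
{ apply Rmin_glb; [| apply Rmin_r].
  apply Rle_trans with (wyner_bound a 0); [apply Rmin_l | apply Hnear0; lra]. }
apply (min_ends_le_of_deriv_antitone _ (fun x => ln (1 - x) - ln x - 4 * tangent_slope a)); [| | lra].
- intros x Hx. apply is_derive_Reals. unfold wyner_bound, binary_entropy. auto_derive; [lra |].
  replace (1 + - x) with (1 - x) by ring. field. lra.
- intros x y Hx Hy.
  assert (ln x <= ln y) by (apply ln_le; lra).
  assert (ln (1 - y) <= ln (1 - x)) by (apply ln_le; lra). lra.
Qed.

Lemma wyner_bound_gt_at_crossover : ln 2 - binary_entropy a < wyner_bound a (2 * a * (1 - a)).
Proof.
unfold wyner_bound. replace (1 - 2 * (2 * a * (1 - a)) - (1 - 2 * a) ^ 2) with 0 by ring.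
pose proof (binary_entropy_lt a (2 * a * (1 - a)) ltac:(lra) ltac:(nra) ltac:(nra)). lra.
Qed.

Lemma wyner_bound_gt_at_0 : ln 2 - binary_entropy a < wyner_bound a 0.
Proof.
unfold wyner_bound, tangent_slope. rewrite binary_entropy_0.
set (L := ln (1 - a) - ln a).
assert (HL : (1 - 2 * a) / (1 - a) < L).
{ assert (Hodds : a / (1 - a) < 1) by (apply (Rdiv_lt_1 a (1 - a)); lra).
  pose proof (ln_lt_sub_1 (a / (1 - a)) ltac:(apply Rdiv_lt_0_compat; lra)
                (Rlt_not_eq _ _ Hodds)) as Hln.
  unfold Rdiv in Hln. rewrite ln_mult, ln_Rinv in Hln by (try apply Rinv_0_lt_compat; lra).
  replace ((1 - 2 * a) / (1 - a)) with (1 - a / (1 - a)) by (field; lra).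
  unfold L, Rdiv. lra. }
assert (Hln : - ln (1 - a) <= a / (1 - a)).
{ pose proof (ln_le_sub_1 (/ (1 - a)) ltac:(apply Rinv_0_lt_compat; lra)) as Hinv.
  rewrite ln_Rinv in Hinv by lra. replace (a / (1 - a)) with (/ (1 - a) - 1) by (field; lra). lra. }
assert (Hgap : a / (1 - a) < a * L / (1 - 2 * a)).
{ apply (Rmult_lt_reg_r ((1 - 2 * a) / a)); [apply Rdiv_lt_0_compat; lra |].
  replace (a / (1 - a) * ((1 - 2 * a) / a)) with ((1 - 2 * a) / (1 - a)) by (field; lra).
  replace (a * L / (1 - 2 * a) * ((1 - 2 * a) / a)) with L by (field; lra). lra. }
replace (2 * (L / (4 * (1 - 2 * a))) * (1 - 2 * 0 - (1 - 2 * a) ^ 2))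
  with (a * L + a * L / (1 - 2 * a)) by (field; lra).
replace (binary_entropy a) with (a * L - ln (1 - a)) by (unfold binary_entropy, L; ring).
lra.
Qed.

End WynerBound.

Lemma sumN_ext n f g : (forall k, (k < n)%nat -> f k = g k) -> sumN n f = sumN n g.
Proof.
induction n as [| n IH]; intros H; simpl; [reflexivity |].
rewrite IH, H; [reflexivity | lia | intros; apply H; lia].
Qed.

Lemma sumN_add n f g : sumN n (fun k => f k + g k) = sumN n f + sumN n g.
Proof. induction n as [| n IH]; simpl; [ring | rewrite IH; ring]. Qed.

Lemma sumN_sub n f g : sumN n (fun k => f k - g k) = sumN n f - sumN n g.
Proof. induction n as [| n IH]; simpl; [ring | rewrite IH; ring]. Qed.

Lemma sumN_scal n c f : sumN n (fun k => c * f k) = c * sumN n f.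
Proof. induction n as [| n IH]; simpl; [ring | rewrite IH; ring]. Qed.

Lemma sumN_le n f g : (forall k, (k < n)%nat -> f k <= g k) -> sumN n f <= sumN n g.
Proof.
induction n as [| n IH]; intros H; simpl; [lra |].
apply Rplus_le_compat; [apply IH; intros; apply H |apply H]; lia.
Qed.

Lemma sumN_term_le n f k :
  (k < n)%nat -> (forall j, (j < n)%nat -> 0 <= f j) -> f k <= sumN n f.
Proof.
induction n as [| n IH]; intros Hk H; [lia |]. simpl.
assert (0 <= sumN n f).
{ apply Rle_trans with (sumN n (fun _ => 0)).
  - clear. induction n as [| n IH]; simpl; lra.
  - apply sumN_le. intros; apply H; lia. }
destruct (Nat.eq_dec k n) as [-> | Hkn]; [lra |].
assert (f k <= sumN n f) by (apply IH; [lia | intros; apply H; lia]).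
pose proof (H n ltac:(lia)). lra.
Qed.

Lemma plog_0 b : plog 0 b = 0.
Proof. unfold plog. destruct (Req_EM_T 0 0); [reflexivity | lra]. Qed.

Lemma plog_pos a b : 0 < a -> plog a b = a * ln (a / b).
Proof. intros Ha. unfold plog. destruct (Req_EM_T a 0); [lra | reflexivity]. Qed.

Lemma plog_mul a b c :
  0 <= a -> (0 < a -> 0 < b /\ 0 < c) -> plog a (b * c) = a * ln a - a * ln b - a * ln c.
Proof.
intros Ha Hbc. destruct (Req_dec a 0) as [-> | Ha0]; [rewrite plog_0; ring |].
destruct (Hbc ltac:(lra)). rewrite plog_pos by lra. unfold Rdiv.
rewrite ln_mult, ln_Rinv, ln_mult by (try apply Rinv_0_lt_compat; try apply Rmult_lt_0_compat; lra).
ring.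
Qed.

(* Gibbs' inequality in pointwise form: [ln t <= t - 1] at [t = b / a]. *)
Lemma plog_ge_sub a b : 0 <= a -> 0 <= b -> (0 < a -> 0 < b) -> a - b <= plog a b.
Proof.
intros Ha Hb Hab. destruct (Req_dec a 0) as [-> | Ha0]; [rewrite plog_0; lra |].
specialize (Hab ltac:(lra)). rewrite plog_pos by lra.
pose proof (ln_le_sub_1 (b / a) ltac:(apply Rdiv_lt_0_compat; lra)).
replace (a / b) with (/ (b / a)) by (field; lra).
rewrite ln_Rinv by (apply Rdiv_lt_0_compat; lra).
replace b with (a * (b / a)) at 1 by (field; lra). nra.
Qed.

Section JointLaw.
Variable n : nat.
Variable p : joint.
Hypothesis p_ge0 : forall x u y, 0 <= p x u y.

Lemma pU_ge0 u : 0 <= pU p u.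
Proof.
unfold pU, sumB.
pose proof (p_ge0 false u false). pose proof (p_ge0 false u true).
pose proof (p_ge0 true u false). pose proof (p_ge0 true u true). lra.
Qed.

Lemma p_le_pU x u y : p x u y <= pU p u.
Proof.
unfold pU, sumB.
pose proof (p_ge0 false u false). pose proof (p_ge0 false u true).
pose proof (p_ge0 true u false). pose proof (p_ge0 true u true). destruct x, y; lra.
Qed.

Lemma pXU_le_pU x u : pXU p x u <= pU p u.
Proof.
unfold pXU, pU, sumB.
pose proof (p_ge0 false u false). pose proof (p_ge0 false u true).
pose proof (p_ge0 true u false). pose proof (p_ge0 true u true). destruct x; lra.
Qed.

Lemma pXU_le_pX x u : (u < n)%nat -> pXU p x u <= pX n p x.
Proof.
intros Hu. apply (sumN_term_le n (fun u => sumB (p x u))); [exact Hu |].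
intros j _. unfold sumB. pose proof (p_ge0 x j false). pose proof (p_ge0 x j true). lra.
Qed.

Lemma p_le_pXY x u y : (u < n)%nat -> p x u y <= pXY n p x y.
Proof. intros Hu. apply (sumN_term_le n (fun u => p x u y)); auto. Qed.

Lemma sumN_pU : sumB (fun x => sumN n (fun u => sumB (fun y => p x u y))) = 1 ->
  sumN n (pU p) = 1.
Proof. intros H. rewrite <- H. unfold pU, sumB. rewrite !sumN_add. ring. Qed.

Lemma sumB_pXY_l x : sumB (pXY n p x) = pX n p x.
Proof. unfold pXY, pX, sumB. rewrite sumN_add. reflexivity. Qed.

Lemma sumB_pXY_r y : sumB (fun x => pXY n p x y) = pY n p y.
Proof. unfold pXY, pY, sumB. rewrite sumN_add. reflexivity. Qed.

Lemma pXY_coupling :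
  (forall x, pX n p x = 1/2) -> (forall y, pY n p y = 1/2) -> coupling (pXY n p).
Proof.
intros HX HY. split; [| split].
- intros x y. apply Rle_trans with (sumN n (fun _ => 0)).
  + clear. induction n as [| m IH]; simpl; lra.
  + apply sumN_le. auto.
- intros x. rewrite sumB_pXY_l. apply HX.
- intros y. rewrite sumB_pXY_r. apply HY.
Qed.

Lemma MI_XU_ge0 : valid n p -> 0 <= MI_XU n p.
Proof.
intros (_ & _ & Hsum). pose proof (sumN_pU Hsum) as HU.
assert (Hterm : forall x u, (u < n)%nat ->
          pXU p x u - pX n p x * pU p u <= plog (pXU p x u) (pX n p x * pU p u)).
{ intros x u Hu. pose proof (pU_ge0 u). pose proof (pXU_le_pU x u). pose proof (pXU_le_pX x u Hu).
  assert (0 <= pXU p x u).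
  { unfold pXU, sumB. pose proof (p_ge0 x u false). pose proof (p_ge0 x u true). lra. }
  apply plog_ge_sub; [lra | apply Rmult_le_pos; lra | intros; apply Rmult_lt_0_compat; lra]. }
apply Rle_trans with (sumB (fun x => sumN n (fun u => pXU p x u - pX n p x * pU p u))).
- unfold sumB. rewrite !sumN_sub, !sumN_scal, HU.
  change (sumN n (pXU p false)) with (pX n p false).
  change (sumN n (pXU p true)) with (pX n p true). lra.
- unfold MI_XU, sumB. apply Rplus_le_compat; apply sumN_le; intros u Hu; apply Hterm, Hu.
Qed.

End JointLaw.

Definition bern (t : R) (b : bool) : R := if b then t else 1 - t.

Lemma mul_ln_mul3 w s t :
  0 <= w -> 0 <= s -> 0 <= t ->
  w * s * t * ln (w * s * t) - w * s * t * ln w = w * (t * (s * ln s) + s * (t * ln t)).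
Proof.
intros Hw Hs Ht.
destruct (Req_dec w 0) as [-> | Hw0]; [ring |].
destruct (Req_dec s 0) as [-> | Hs0]; [ring |].
destruct (Req_dec t 0) as [-> | Ht0]; [ring |].
rewrite !ln_mult by (try apply Rmult_lt_0_compat; lra). ring.
Qed.

Lemma sumB_xlnx_product (f : bool -> bool -> R) w s t :
  0 <= w -> 0 <= s <= 1 -> 0 <= t <= 1 ->
  (forall x y, f x y = w * bern s x * bern t y) ->
  sumB (fun x => sumB (fun y => f x y * ln (f x y) - f x y * ln w)) =
  - w * (binary_entropy s + binary_entropy t).
Proof.
intros Hw Hs Ht Hf. unfold sumB. rewrite !Hf.
rewrite !mul_ln_mul3 by (unfold bern; lra).
unfold bern, binary_entropy. ring.
Qed.

Section Markov.
Variable p : joint.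
Hypothesis p_ge0 : forall x u y, 0 <= p x u y.
Hypothesis p_markov : markov p.

Lemma markov_product u :
  0 < pU p u ->
  forall x y, p x u y = pU p u * bern (pXU p true u / pU p u) x * bern (pUY p u true / pU p u) y.
Proof.
intros Hw x y.
assert (HX : pXU p x u = pU p u * bern (pXU p true u / pU p u) x).
{ unfold pU, sumB in Hw. destruct x; unfold bern, pXU, pU, sumB; field; lra. }
assert (HY : pUY p u y = pU p u * bern (pUY p u true / pU p u) y).
{ unfold pU, sumB in Hw. destruct y; unfold bern, pUY, pU, sumB; field; lra. }
apply (Rmult_eq_reg_r (pU p u)); [| lra].
rewrite p_markov, HX, HY. ring.
Qed.

Lemma cond_entropy_bound a u :
  0 < a < 1/2 ->
  - 2 * binary_entropy a * pU p u
  + 2 * tangent_slope a * (pU p u - 2 * (p false u true + p true u false) - (1 - 2 * a) ^ 2 * pU p u)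
  <= sumB (fun x => sumB (fun y => p x u y * ln (p x u y) - p x u y * ln (pU p u))).
Proof.
intros Ha. pose proof (pU_ge0 p p_ge0 u) as Hw.
destruct (Rle_lt_or_eq_dec 0 (pU p u) Hw) as [Hw0 | Hw0].
2:{ assert (Hp0 : forall x y, p x u y = 0).
  { intros x y. pose proof (p_ge0 x u y). pose proof (p_le_pU p p_ge0 x u y). lra. }
  unfold sumB. rewrite !Hp0, <- Hw0. lra. }
set (s := pXU p true u / pU p u). set (t := pUY p u true / pU p u).
assert (Hs : 0 <= s <= 1).
{ unfold s. pose proof (pXU_le_pU p p_ge0 true u). unfold pXU, sumB in *.
  pose proof (p_ge0 true u false). pose proof (p_ge0 true u true).
  split; [apply Rdiv_le_0_compat | apply (Rdiv_le_1 _ _ Hw0)]; lra. }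
assert (Ht : 0 <= t <= 1).
{ unfold t. assert (pUY p u true <= pU p u).
  { unfold pUY, pU, sumB. pose proof (p_ge0 false u false). pose proof (p_ge0 true u false). lra. }
  unfold pUY, sumB in *. pose proof (p_ge0 false u true). pose proof (p_ge0 true u true).
  split; [apply Rdiv_le_0_compat | apply (Rdiv_le_1 _ _ Hw0)]; lra. }
rewrite (sumB_xlnx_product (fun x y => p x u y) (pU p u) s t) by (auto; apply markov_product; lra).
rewrite !(markov_product u) by lra. fold s t.
pose proof (Rmult_le_compat_l (pU p u) _ _ Hw (binary_entropy_add_le a Ha s t Hs Ht)).
unfold bern. nra.
Qed.

End Markov.

Lemma sumN_plog_pXY n p x y :
  (forall x u y, 0 <= p x u y) ->
  sumN n (fun u => plog (p x u y) (pXY n p x y * pU p u)) =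
  sumN n (fun u => p x u y * ln (p x u y) - p x u y * ln (pU p u)) - pXY n p x y * ln (pXY n p x y).
Proof.
intros Hp.
rewrite (sumN_ext n _ (fun u =>
  (p x u y * ln (p x u y) - p x u y * ln (pU p u)) - ln (pXY n p x y) * p x u y)).
- rewrite sumN_sub, sumN_scal. fold (pXY n p x y). ring.
- intros u Hu. rewrite plog_mul; [ring | apply Hp |].
  intros Hpos. pose proof (p_le_pXY n p Hp x u y Hu). pose proof (p_le_pU p Hp x u y). lra.
Qed.

Lemma coupling_entropy q :
  coupling q ->
  - sumB (fun x => sumB (fun y => q x y * ln (q x y))) =
  ln 2 + binary_entropy (q false true + q true false).
Proof.
intros (Hq & Hrow & Hcol).
assert (Hhalf : forall t, 0 <= t -> t / 2 * ln (t / 2) = / 2 * (t * ln t) - / 2 * t * ln 2).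
{ intros t Ht. destruct (Req_dec t 0) as [-> | Ht0]; [unfold Rdiv; ring |].
  unfold Rdiv. rewrite ln_mult, ln_Rinv by (try apply Rinv_0_lt_compat; lra). ring. }
pose proof (Hrow false) as R0. pose proof (Hrow true) as R1.
pose proof (Hcol false) as C0. pose proof (Hcol true) as C1. unfold sumB in *.
set (e := q false true + q true false).
assert (He : 0 <= e <= 1).
{ pose proof (Hq false false). pose proof (Hq false true). pose proof (Hq true false).
  unfold e. lra. }
replace (q false true) with (e / 2) by (unfold e; lra).
replace (q true false) with (e / 2) by (unfold e; lra).
replace (q false false) with ((1 - e) / 2) by (unfold e; lra).
replace (q true true) with ((1 - e) / 2) by (unfold e; lra).
rewrite !Hhalf by lra. unfold binary_entropy. field.
Qed.

Lemma wyner_bound_le_MI_XY_U a q n p :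
  0 < a < 1/2 -> coupling q -> valid n p -> markov p ->
  (forall x y, pXY n p x y = q x y) ->
  wyner_bound a (q false true + q true false) <= MI_XY_U n p.
Proof.
intros Ha Hq (Hp & _ & Hsum) Hm HpXY.
pose proof (coupling_entropy q Hq) as Hent.
assert (HMI : MI_XY_U n p =
   sumN n (fun u => sumB (fun x => sumB (fun y => p x u y * ln (p x u y) - p x u y * ln (pU p u))))
   - sumB (fun x => sumB (fun y => q x y * ln (q x y)))).
{ unfold MI_XY_U, sumB. rewrite !sumN_plog_pXY, !HpXY, !sumN_add by exact Hp. ring. }
assert (Hcross : sumN n (fun u => p false u true + p true u false) = q false true + q true false).
{ rewrite sumN_add, <- !HpXY. reflexivity. }
pose proof (sumN_le n _ _ (fun u _ => cond_entropy_bound p Hp Hm a u Ha)) as Hsum_u.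
rewrite sumN_add, sumN_scal, sumN_scal, !sumN_sub, sumN_scal, sumN_scal, Hcross, (sumN_pU n p Hsum)
  in Hsum_u.
unfold wyner_bound. rewrite HMI. lra.
Qed.

(* [bsc a u] is the output law of a binary symmetric channel with crossover [a] fed with [u];
   in [bsc_scheme a], [U] is uniform on {0,1} and [X], [Y] are two independent outputs. *)
Definition bsc (a : R) (u : nat) (x : bool) : R :=
  match u with O => bern a x | 1%nat => bern a (negb x) | _ => 0 end.

Definition bsc_scheme (a : R) : joint := fun x u y => / 2 * bsc a u x * bsc a u y.

Section BscScheme.
Variable a : R.
Hypothesis Ha : 0 < a < 1/2.

Lemma bsc_scheme_ge0 x u y : 0 <= bsc_scheme a x u y.
Proof.
unfold bsc_scheme. destruct u as [| [| u]]; destruct x, y; simpl; unfold bern; simpl; nra.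
Qed.

Lemma pXU_bsc_scheme x u : pXU (bsc_scheme a) x u = / 2 * bsc a u x.
Proof. unfold pXU, bsc_scheme, sumB. destruct u as [| [| u]], x; simpl; unfold bern; simpl; ring. Qed.

Lemma pUY_bsc_scheme u y : pUY (bsc_scheme a) u y = / 2 * bsc a u y.
Proof. unfold pUY, bsc_scheme, sumB. destruct u as [| [| u]], y; simpl; unfold bern; simpl; ring. Qed.

Lemma pU_bsc_scheme u : (u < 2)%nat -> pU (bsc_scheme a) u = / 2.
Proof.
intros Hu. unfold pU, bsc_scheme, sumB.
destruct u as [| [| u]]; [| | lia]; simpl; unfold bern; simpl; field.
Qed.

Lemma pX_bsc_scheme x : pX 5 (bsc_scheme a) x = 1/2.
Proof.
change (sumN 5 (pXU (bsc_scheme a) x) = 1/2). simpl. rewrite !pXU_bsc_scheme.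
destruct x; simpl; unfold bern; simpl; field.
Qed.

Lemma pY_bsc_scheme y : pY 5 (bsc_scheme a) y = 1/2.
Proof.
change (sumN 5 (fun u => pUY (bsc_scheme a) u y) = 1/2). simpl. rewrite !pUY_bsc_scheme.
destruct y; simpl; unfold bern; simpl; field.
Qed.

Lemma bsc_scheme_valid : valid 5 (bsc_scheme a).
Proof.
split; [exact bsc_scheme_ge0 | split].
- intros x u y Hu. unfold bsc_scheme.
  destruct u as [| [| u]]; [lia | lia | simpl; ring].
- change (pX 5 (bsc_scheme a) false + pX 5 (bsc_scheme a) true = 1).
  rewrite !pX_bsc_scheme. field.
Qed.

Lemma bsc_scheme_markov : markov (bsc_scheme a).
Proof.
intros x u y. rewrite pXU_bsc_scheme, pUY_bsc_scheme.
destruct u as [| [| u]].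
- rewrite pU_bsc_scheme by lia. unfold bsc_scheme. field.
- rewrite pU_bsc_scheme by lia. unfold bsc_scheme. field.
- unfold bsc_scheme. simpl. ring.
Qed.

Lemma pXY_bsc_scheme_cross :
  pXY 5 (bsc_scheme a) false true + pXY 5 (bsc_scheme a) true false = 2 * a * (1 - a).
Proof. unfold pXY, bsc_scheme. simpl. unfold bern. simpl. field. Qed.

Lemma plog_half t : 0 < t -> plog (/ 2 * t) (/ 2 * / 2) = / 2 * t * (ln 2 + ln t).
Proof.
intros Ht. rewrite plog_pos by lra.
replace (/ 2 * t / (/ 2 * / 2)) with (2 * t) by (field; lra).
rewrite ln_mult by lra. reflexivity.
Qed.

Lemma bsc_scheme_information :
  sumB (fun x => sumN 5 (fun u => plog (/ 2 * bsc a u x) (1/2 * pU (bsc_scheme a) u))) =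
  ln 2 - binary_entropy a.
Proof.
unfold sumB. simpl. rewrite !pU_bsc_scheme by lia. rewrite !Rmult_0_r, !plog_0.
replace (1/2 * / 2) with (/ 2 * / 2) by field. unfold bern. simpl.
rewrite !plog_half by lra. unfold binary_entropy. field.
Qed.

Lemma MI_XU_bsc_scheme : MI_XU 5 (bsc_scheme a) = ln 2 - binary_entropy a.
Proof.
rewrite <- bsc_scheme_information. unfold MI_XU, sumB. rewrite !pX_bsc_scheme.
f_equal; apply sumN_ext; intros u _; rewrite pXU_bsc_scheme; reflexivity.
Qed.

Lemma MI_YU_bsc_scheme : MI_YU 5 (bsc_scheme a) = ln 2 - binary_entropy a.
Proof.
rewrite <- bsc_scheme_information. unfold MI_YU, sumB. rewrite !pY_bsc_scheme.
f_equal; apply sumN_ext; intros u _; rewrite pUY_bsc_scheme; reflexivity.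
Qed.

Lemma I0_set_bsc_scheme : I0_set (2 * a * (1 - a)) (ln 2 - binary_entropy a).
Proof.
exists (bsc_scheme a).
split; [exact bsc_scheme_valid | split; [exact bsc_scheme_markov |]].
split; [exact pX_bsc_scheme | split; [exact pY_bsc_scheme |]].
split; [unfold distortion; rewrite pXY_bsc_scheme_cross; lra |].
rewrite MI_XU_bsc_scheme, MI_YU_bsc_scheme. unfold Rmax. destruct (Rle_dec _ _); reflexivity.
Qed.

Lemma Wyner_set_ge q r :
  coupling q -> q false true + q true false <= 2 * a * (1 - a) -> Wyner_set q r ->
  Rmin (wyner_bound a 0) (wyner_bound a (2 * a * (1 - a))) <= r.
Proof.
intros Hq He (n & p & Hv & Hm & HpXY & ->).
apply Rle_trans with (wyner_bound a (q false true + q true false)).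
- destruct Hq as (Hq0 & _). pose proof (Hq0 false true). pose proof (Hq0 true false).
  apply wyner_bound_min_ends; [lra | nra | lra].
- exact (wyner_bound_le_MI_XY_U a q n p Ha Hq Hv Hm HpXY).
Qed.

Lemma bsc_scheme_coupling : coupling (pXY 5 (bsc_scheme a)).
Proof. exact (pXY_coupling 5 _ bsc_scheme_ge0 pX_bsc_scheme pY_bsc_scheme). Qed.

Lemma C0_set_ge c :
  C0_set (2 * a * (1 - a)) c -> Rmin (wyner_bound a 0) (wyner_bound a (2 * a * (1 - a))) <= c.
Proof. intros (q & Hq & He & _ & Hglb). apply Hglb. intros r. apply Wyner_set_ge; assumption. Qed.

End BscScheme.

Lemma is_inf_exists (S : R -> Prop) :
  (exists r, S r) -> (exists m, forall r, S r -> m <= r) -> exists m, is_inf S m.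
Proof.
intros [r0 Hr0] [m Hm].
destruct (completeness (fun y => S (- y))) as [l [Hub Hlub]].
- exists (- m). intros y Hy. pose proof (Hm _ Hy). lra.
- exists (- r0). rewrite Ropp_involutive. exact Hr0.
- exists (- l). split.
  + intros r Hr. enough (- r <= l) by lra. apply Hub. rewrite Ropp_involutive. exact Hr.
  + intros m' Hm'. enough (l <= - m') by lra.
    apply Hlub. intros y Hy. pose proof (Hm' _ Hy). lra.
Qed.

Lemma I0_set_ge0 D r : I0_set D r -> 0 <= r.
Proof.
intros (p & Hv & _ & _ & _ & _ & ->).
apply Rle_trans with (MI_XU 5 p); [apply (MI_XU_ge0 5 p (proj1 Hv) Hv) | apply Rmax_l].
Qed.

Lemma C0_set_nonempty a : 0 < a < 1/2 -> exists c, C0_set (2 * a * (1 - a)) c.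
Proof.
intros Ha. pose proof (bsc_scheme_coupling a Ha) as Hq.
pose proof (pXY_bsc_scheme_cross a) as He.
destruct (is_inf_exists (Wyner_set (pXY 5 (bsc_scheme a)))) as [c Hc].
- exists (MI_XY_U 5 (bsc_scheme a)), 5%nat, (bsc_scheme a).
  split; [exact (bsc_scheme_valid a Ha) | split; [exact (bsc_scheme_markov a) | split; reflexivity]].
- eexists. intros r. apply (Wyner_set_ge a Ha); [exact Hq | lra].
- exists c, (pXY 5 (bsc_scheme a)). split; [exact Hq | split; [lra | exact Hc]].
Qed.

Lemma crossover_of_distortion D : 0 < D < 1/2 -> exists a, 0 < a < 1/2 /\ 2 * a * (1 - a) = D.
Proof.
intros HD. exists ((1 - sqrt (1 - 2 * D)) / 2).
pose proof (sqrt_sqrt (1 - 2 * D) ltac:(lra)). pose proof (sqrt_lt_R0 (1 - 2 * D) ltac:(lra)).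
split; [split |]; nra.
Qed.

Theorem mainTheorem7 : forall D : R, 0 < D < 1/2 ->
  exists a b : R, is_inf (I0_set D) a /\ is_inf (C0_set D) b /\ a < b.
Proof.
intros D HD. destruct (crossover_of_distortion D HD) as (a & Ha & <-).
destruct (is_inf_exists (I0_set (2 * a * (1 - a)))) as [i Hi].
{ eexists. exact (I0_set_bsc_scheme a Ha). }
{ exists 0. apply I0_set_ge0. }
destruct (is_inf_exists (C0_set (2 * a * (1 - a)))) as [c Hc].
{ exact (C0_set_nonempty a Ha). }
{ eexists. exact (C0_set_ge a Ha). }
exists i, c. split; [exact Hi | split; [exact Hc |]].
pose proof (proj1 Hi _ (I0_set_bsc_scheme a Ha)).
pose proof (proj2 Hc _ (C0_set_ge a Ha)).
pose proof (Rmin_glb_lt _ _ _ (wyner_bound_gt_at_0 a Ha) (wyner_bound_gt_at_crossover a Ha)).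
lra.
Qed.
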